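(* Let $a\ge b\ge1$ and $k$ be integers with $a+b+1\le k\le2a+b$. Then for every $(i,j)\in\overline{Q}_2$: - if $a+b+1\le k\le a+2b-1$, then $w_6\in\mathcal{R}^k_{(a,b),(i,j)}$; - if $a\ne b$ and $a+2b\le k\le2a+b$, then $w_1\in\mathcal{R}^k_{(a,b),(i,j)}$; - if $a\ne b$ and $k=a+2b$, then $w_4\in\mathcal{R}^k_{(a,b),(i,j)}$.
   Context: $\widehat{\mathfrak{su}}(3)_k$ fusion. Let $P_+^k=\{(\lambda_1,\lambda_2)\in\mathbb{Z}_{\ge0}^2:\lambda_1+\lambda_2\le k\}$. For $\lambda,\mu,\nu\in P_+^k$ set - $\mathcal{A}=\tfrac13[2(\lambda_1+\mu_1+\nu_2)+\lambda_2+\mu_2+\nu_1]$, - $\mathcal{B}=\tfrac13[\lambda_1+\mu_1+\nu_2+2(\lambda_2+\mu_2+\nu_1)]$, - $k_0^{\max}=\min(\mathcal{A},\mathcal{B})$, - $k_0^{\min}=\max(\lambda_1+\lambda_2,\mu_1+\mu_2,\nu_1+\nu_2,\mathcal{A}-\lambda_1,\mathcal{A}-\mu_1,\mathcal{A}-\nu_2,\mathcal{B}-\lambda_2,\mathcal{B}-\mu_2,\mathcal{B}-\nu_1)$. The fusion multiplicity is $N^{(k)\nu}_{\lambda,\mu}=\min(k_0^{\max},k)-k_0^{\min}+1$ if $\mathcal{A},\mathcal{B}$ are nonnegative integers, $k_0^{\max}\ge k_0^{\min}$ and $k\ge k_0^{\min}$; otherwise it is $0$. The set $\mathcal{R}^k_{\lambda,\mu}$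 is $\{\nu\in P_+^k:N^{(k)\nu}_{\lambda,\mu}\ne0\}$. The candidate weights are $w_1=(a-1,b+2)$, $w_2=(a+2,b-1)$, $w_3=(a+1,b-2)$, $w_4=(a-2,b+1)$, $w_5=(a+1,b+1)$, $w_6=(a-1,b-1)$. The set $\overline{Q}_2$ is defined by $\overline{Q}_2=\{(k-a+l,k-a-2l):l\in\mathbb{Z},\ \max(1,k-2a)\le l\le\min(k-a-b,\lfloor(k-a)/2\rfloor,b)\}$. *)

From HB Require Import structures.
From mathcomp Require Import all_boot all_order all_algebra.
Set Implicit Arguments. Unset Strict Implicit. Unset Printing Implicit Defensive.
Import Order.TTheory GRing.Theory Num.Theory.
Local Open Scope ring_scope.

(* Weights of su(3) are pairs of integers (l1, l2). *)
Definition wt := (int * int)%type.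

Definition inPk (k : int) (l : wt) : bool :=
  [&& 0 <= l.1, 0 <= l.2 & l.1 + l.2 <= k].

Definition cA (l m n : wt) : rat :=
  ((2 * (l.1 + m.1 + n.2) + l.2 + m.2 + n.1)%:~R) / 3%:R.
Definition cB (l m n : wt) : rat :=
  (((l.1 + m.1 + n.2) + 2 * (l.2 + m.2 + n.1))%:~R) / 3%:R.

Definition k0max (l m n : wt) : rat := Num.min (cA l m n) (cB l m n).

Definition k0min (l m n : wt) : rat :=
  let A := cA l m n in let B := cB l m n in
  Num.max ((l.1 + l.2)%:~R)
  (Num.max ((m.1 + m.2)%:~R)
  (Num.max ((n.1 + n.2)%:~R)
  (Num.max (A - l.1%:~R)
  (Num.max (A - m.1%:~R)
  (Num.max (A - n.2%:~R)
  (Num.max (B - l.2%:~R)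
  (Num.max (B - m.2%:~R) (B - n.1%:~R)))))))).

Definition fusion (k : int) (l m n : wt) : rat :=
  if [&& cA l m n \is a Num.nat, cB l m n \is a Num.nat,
         k0min l m n <= k0max l m n & k0min l m n <= k%:~R]
  then Num.min (k0max l m n) k%:~R - k0min l m n + 1
  else 0.

Definition fusionR (k : int) (l m : wt) : pred wt :=
  [pred n | inPk k n && (fusion k l m n != 0)].

Definition Q2bar (k a b : int) (p : wt) : Prop :=
  exists l : int,
    [/\ Num.max 1 (k - 2 * a) <= l,
        l <= Num.min (k - a - b) (Num.min ((k - a) %/ 2)%Z b)
      & p = (k - a + l, k - a - 2 * l)].

From HB Require Import structures.
From mathcomp Require Import all_boot all_order all_algebra zify.
Import Order.TTheory GRing.Theory Num.Theory.
Local Open Scope ring_scope.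

(* Once i and j are read off from the parametrisation of Q2bar, the quantities
   A and B are integers (linear in k, b and l) and each of the nine lower
   bounds defining k0min is at most min(A, B, k) by linear arithmetic in the
   constraints on l; so the fusion multiplicity is positive. *)

Lemma intr_mul3K (X : int) : ((3 * X)%:~R : rat) / 3%:R = X%:~R.
Proof. by rewrite intrM mulrAC divff ?mul1r. Qed.

Lemma intr_nat (X : int) : ((X%:~R : rat) \is a Num.nat) = (0 <= X).
Proof. by rewrite natrEint intr_int ler0z. Qed.

Definition k0min_terms (l m n : wt) (A B : int) : seq int :=
  [:: l.1 + l.2; m.1 + m.2; n.1 + n.2; A - l.1; A - m.1; A - n.2;
      B - l.2; B - m.2; B - n.1].

Section FusionPositive.

Variables (k : int) (l m n : wt) (A B : int).
Hypothesis cA3 : 2 * (l.1 + m.1 + n.2) + l.2 + m.2 + n.1 = 3 * A.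
Hypothesis cB3 : (l.1 + m.1 + n.2) + 2 * (l.2 + m.2 + n.1) = 3 * B.
Hypotheses (A_ge0 : 0 <= A) (B_ge0 : 0 <= B).
Hypothesis k0min_le :
  all (fun t => [&& t <= A, t <= B & t <= k]) (k0min_terms l m n A B).

Lemma fusion_gt0 : 0 < fusion k l m n.
Proof.
have eA : cA l m n = A%:~R by rewrite /cA cA3 intr_mul3K.
have eB : cB l m n = B%:~R by rewrite /cB cB3 intr_mul3K.
have : k0min l m n <= Num.min (k0max l m n) k%:~R.
  move: k0min_le; rewrite /k0min /k0max eA eB -!intrB !ge_max !le_min !ler_int /=.
  lia.
rewrite le_min => /andP[le_k0max le_k].
rewrite /fusion eA eB !intr_nat A_ge0 B_ge0 le_k0max le_k /=.
by rewrite ltr_wpDl ?ltr01 // subr_ge0 le_min le_k0max le_k.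
Qed.

Lemma mem_fusionR : 0 <= n.1 -> 0 <= n.2 -> n \in fusionR k l m.
Proof.
move=> n1_ge0 n2_ge0; rewrite inE /inPk n1_ge0 n2_ge0 lt0r_neq0 ?fusion_gt0 //.
by move: k0min_le => /=; lia.
Qed.

End FusionPositive.

Lemma Q2barP (k a b i j : int) : Q2bar k a b (i, j) ->
  exists2 l : int, [/\ 1 <= l, k - 2 * a <= l, l <= k - a - b,
                       2 * l <= k - a & l <= b]
                 & (i, j) = (k - a + l, k - a - 2 * l).
Proof.
case=> l [+ + ->]; rewrite ge_max !le_min => /andP[l_ge1 l_ge] /and3P[l_le1 l_le2 l_le3].
by exists l => //; split=> //; lia.
Qed.

Theorem mainTheorem10 (a b k : int) :
  1 <= b -> b <= a -> a + b + 1 <= k -> k <= 2 * a + b ->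
  forall i j : int, Q2bar k a b (i, j) ->
  [/\ (a + b + 1 <= k -> k <= a + 2 * b - 1 ->
         (a - 1, b - 1) \in fusionR k (a, b) (i, j)),
      (a != b -> a + 2 * b <= k -> k <= 2 * a + b ->
         (a - 1, b + 2) \in fusionR k (a, b) (i, j))
    & (a != b -> k = a + 2 * b ->
         (a - 2, b + 1) \in fusionR k (a, b) (i, j))].
Proof.
move=> b_ge1 le_ba lo_k hi_k i j /Q2barP[l [l_ge1 l_ge l_le1 l_le2 l_le3] [-> ->]].
split.
- move=> _ k_le.
  by apply: (@mem_fusionR _ _ _ _ (k + b - 1) (k + b - 1 - l)) => /=; lia.
- move=> /eqP a_neq_b k_ge _.
  by apply: (@mem_fusionR _ _ _ _ (k + b + 1) (k + b - l)) => /=; lia.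
- move=> /eqP a_neq_b k_eq.
  by apply: (@mem_fusionR _ _ _ _ (k + b) (k + b - 1 - l)) => /=; lia.
Qed.
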